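(* Let $n\ge2$, let $v\in\mathbb A^{n-1}$, and let $x\ne x'$ be elements of $\Lambda$. Then for all $z\in v+x+V$ and $z'\in v+x'+V$ one has $\|z-z'\|\ge\frac1{n-1}$. In particular, for each $i$ the sets of $\mathfrak U_i=\{g_i+x+V:x\in\Lambda\}$ are pairwise at distance at least $1/(n-1)$.
   Context: $\mathbb A^{n-1}=\{x\in\mathbb R^n:\sum_{i=1}^n x_i=0\}$ with the norm $\|x\|=\sum_i|x_i|$. For a nonempty proper subset $I\subset\{1,\dots,n\}$ with complement $I^c$, set $\phi_I(x)=\frac{\sum_{i\in I}x_i}{\#I}-\frac{\sum_{i\notin I}x_i}{\#I^c}$. Let $V=\{x\in\mathbb A^{n-1}:\phi_I(x)\le\tfrac12$ for all nonempty proper $I\}$ and $\Lambda=\mathbb A^{n-1}\cap\mathbb Z^n$. For $i=0,\dots,n-1$ let $g_i\in\mathbb A^{n-1}$ be the vector with coordinates $(g_i)_j=(i-n)/n$ for $j\le i$ and $(g_i)_j=i/n$ for $j>i$. *)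

From HB Require Import structures.
From mathcomp Require Import all_boot all_order all_algebra.
Set Implicit Arguments. Unset Strict Implicit. Unset Printing Implicit Defensive.
Import Order.TTheory GRing.Theory Num.Theory.
Local Open Scope ring_scope.

Section Defs.
Variables (R : realFieldType) (n : nat).

Definition inA (x : 'I_n -> R) : Prop := \sum_(i < n) x i = 0.

Definition norm1 (x : 'I_n -> R) : R := \sum_(i < n) `|x i|.

Definition phi (I : {set 'I_n}) (x : 'I_n -> R) : R :=
  (\sum_(i in I) x i) / #|I|%:R - (\sum_(i in ~: I) x i) / #|~: I|%:R.

Definition inV (x : 'I_n -> R) : Prop :=
  inA x /\ forall I : {set 'I_n}, I != set0 -> I != setT -> phi I x <= 1 / 2.

(* Lambda = A^{n-1} ∩ Z^n, represented by integer vectors with zero sum *)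
Definition inLambda (x : 'I_n -> int) : Prop := \sum_(i < n) x i = 0.

Definition in_translate (a : 'I_n -> R) (x : 'I_n -> int) (z : 'I_n -> R) : Prop :=
  exists w : 'I_n -> R, inV w /\ forall j, z j = a j + (x j)%:~R + w j.

(* g_i : (g_i)_j = (i-n)/n for j <= i and i/n for j > i (1-based j);
   with 0-based j : 'I_n this is j < i. *)
Definition g (i : nat) : 'I_n -> R := fun j =>
  if (j < i)%N then (i%:R - n%:R) / n%:R else i%:R / n%:R.

End Defs.

(* For d = x - x', a nonzero integer vector with zero sum, take I = {j | d_j > 0}: it is nonempty
   and proper. Each phi_I is linear and bounded by the l^1 norm, and on V it takes values in
   [-1/2, 1/2] (as phi_{I^c} = - phi_I). Writing z - z' = d + w - w' with w, w' in V,
   ||z - z'|| >= phi_I(d) + phi_I(w) - phi_I(w') >= phi_I(d) - 1, and since d has zero sum,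
   phi_I(d) = S/#I + S/#I^c with S = sum_{i in I} d_i >= #I and #I^c <= n - 1, so
   phi_I(d) >= 1 + 1/(n-1). The translation v cancels in z - z', and n >= 2 is implied by the
   existence of x <> x' in Lambda. *)
From HB Require Import structures.
From mathcomp Require Import all_boot all_order all_algebra.
From Stdlib Require Import FunctionalExtensionality.
From mathcomp Require Import lra.
Import Order.TTheory GRing.Theory Num.Theory.
Local Open Scope ring_scope.

Lemma setC_eq0 (T : finType) (A : {set T}) : (~: A == set0) = (A == setT).
Proof. by rewrite -setCT (inj_eq (@setC_inj _)). Qed.

Lemma setC_eqT (T : finType) (A : {set T}) : (~: A == setT) = (A == set0).
Proof. by rewrite -setC0 (inj_eq (@setC_inj _)). Qed.

Lemma ler_divr_norm (R : realFieldType) {a c : R} : 1 <= c -> a / c <= `|a|.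
Proof.
move=> c_ge1; have c_gt0 : 0 < c by apply: lt_le_trans c_ge1.
by rewrite ler_pdivrMr // (le_trans (ler_norm a)) // ler_peMr.
Qed.

Lemma sum0_exists_gt0 {R : realDomainType} {T : finType} {f : T -> R} :
  \sum_i f i = 0 -> (exists i, f i != 0) -> exists i, 0 < f i.
Proof.
move=> sum_f0 [i fi_neq0].
have [/existsP [j fj_gt0] | /existsPn f_le0] := boolP [exists j, 0 < f j].
  by exists j.
have Nf_ge0 j : true -> 0 <= - f j by rewrite oppr_ge0 leNgt f_le0.
have sumNf0 : \sum_j - f j = 0 by rewrite sumrN sum_f0 oppr0.
by move: fi_neq0; rewrite -oppr_eq0 (psumr_eq0P Nf_ge0 sumNf0) ?eqxx.
Qed.

Section Phi.
Context {R : realFieldType} {n : nat}.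
Implicit Types (I : {set 'I_n}) (f h w : 'I_n -> R).

Lemma phiD I f h : phi I (fun j => f j + h j) = phi I f + phi I h.
Proof. by rewrite /phi !big_split /= !mulrDl; lra. Qed.

Lemma phiN I f : phi I (fun j => - f j) = - phi I f.
Proof. by rewrite /phi !sumrN !mulNr; lra. Qed.

Lemma phiC I f : phi (~: I) f = - phi I f.
Proof. by rewrite /phi setCK opprB. Qed.

Lemma inV_phi_ge {w I} : inV w -> I != set0 -> I != setT -> - (1 / 2) <= phi I w.
Proof.
move=> [_ w_phi] I0 IT; rewrite lerNl -phiC.
by apply: w_phi; rewrite ?setC_eq0 ?setC_eqT.
Qed.

Lemma card_ge1 {I} : I != set0 -> 1 <= (#|I|%:R : R).
Proof. by rewrite -card_gt0 ler1n. Qed.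

Lemma phi_le_norm1 I f : I != set0 -> I != setT -> phi I f <= norm1 f.
Proof.
move=> I0 IT; have IC0 : ~: I != set0 by rewrite setC_eq0.
rewrite /norm1 (bigID (mem I)) /= /phi.
under [X in _ <= _ + X]eq_bigl => i do rewrite -in_setC.
rewrite -mulNr; apply: lerD; apply: le_trans (ler_norm_sum _ _ _).
  exact: ler_divr_norm (card_ge1 I0).
by rewrite -normrN; apply: ler_divr_norm (card_ge1 IC0).
Qed.

Lemma sum_setC_sum0 I f :
  \sum_i f i = 0 -> \sum_(i in ~: I) f i = - \sum_(i in I) f i.
Proof.
rewrite (bigID (mem I)) /= => /eqP; rewrite addrC addr_eq0 => /eqP <-.
by apply: eq_bigl => i; rewrite in_setC.
Qed.

Lemma card_setC_le {I} : I != set0 -> (#|~: I|%:R : R) <= n%:R - 1.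
Proof.
move=> I0; have := card_ge1 I0.
have -> : n%:R = (#|I| + #|~: I|)%:R :> R by rewrite cardsC card_ord.
by rewrite natrD; lra.
Qed.

Lemma phi_ge_sum0 I f :
    \sum_i f i = 0 -> I != set0 -> I != setT -> (forall i, i \in I -> 1 <= f i) ->
  1 + 1 / (n%:R - 1) <= phi I f.
Proof.
move=> sum_f0 I0 IT f_ge1; have IC0 : ~: I != set0 by rewrite setC_eq0.
set S := \sum_(i in I) f i.
have S_ge : #|I|%:R <= S by rewrite -sum1_card natr_sum ler_sum.
have cardI_ge1 := card_ge1 I0; have cardIC_ge1 := card_ge1 IC0.
have cardI_gt0 : 0 < (#|I|%:R : R) by apply: lt_le_trans cardI_ge1.
have cardIC_gt0 : 0 < (#|~: I|%:R : R) by apply: lt_le_trans cardIC_ge1.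
have cardIC_le := card_setC_le I0.
have ge1 : 1 <= S / #|I|%:R by rewrite ler_pdivlMr // mul1r.
have ge_inv : 1 / (n%:R - 1) <= S / #|~: I|%:R.
  apply: (@le_trans _ _ (1 / #|~: I|%:R)).
    by rewrite !div1r lef_pV2 ?posrE // (lt_le_trans cardIC_gt0).
  by apply: ler_wpM2r; [rewrite invr_ge0 ltW | apply: le_trans S_ge].
by rewrite /phi sum_setC_sum0 // mulNr opprK; apply: lerD.
Qed.

End Phi.

Lemma sum0_gt0_set_proper {n : nat} {d : 'I_n -> int} :
    \sum_i d i = 0 -> (exists j, d j != 0) ->
  [set j | 0 < d j] != set0 /\ [set j | 0 < d j] != setT.
Proof.
move=> sum_d0 [j dj_neq0].
have [jp dp_gt0] := sum0_exists_gt0 sum_d0 (ex_intro _ j dj_neq0).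
have [jn dn_lt0] : exists j, 0 < - d j.
  by apply: sum0_exists_gt0; [rewrite sumrN sum_d0 oppr0 | exists j; rewrite oppr_eq0].
rewrite oppr_gt0 in dn_lt0; split.
  by apply/set0Pn; exists jp; rewrite inE.
by apply/negP => /eqP/setP/(_ jn); rewrite !inE ltNge ltW.
Qed.

Lemma norm1_sub_translates_ge (R : realFieldType) (n : nat) (v : 'I_n -> R)
    (x x' : 'I_n -> int) :
    inLambda x -> inLambda x' -> x <> x' -> forall z z' : 'I_n -> R,
    in_translate v x z -> in_translate v x' z' ->
  1 / (n%:R - 1) <= norm1 (fun j => z j - z' j).
Proof.
move=> x_sum0 x'_sum0 x_neq z z' [w [w_V z_def]] [w' [w'_V z'_def]].
set d := fun j => x j - x' j.
have d_sum0 : \sum_i d i = 0 by rewrite sumrB x_sum0 x'_sum0 subrr.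
have d_neq0 : exists j, d j != 0.
  apply/existsP; apply: contra_notT x_neq => /existsPn d0.
  by apply: functional_extensionality => j; apply/eqP; rewrite -subr_eq0 -[_ == _]negbK d0.
have [I0 IT] := sum0_gt0_set_proper d_sum0 d_neq0.
set I := [set j | 0 < d j] in I0 IT.
have -> : (fun j => z j - z' j) = (fun j => (d j)%:~R + (w j + - w' j)).
  by apply: functional_extensionality => j; rewrite z_def z'_def intrB; lra.
apply: (le_trans _ (phi_le_norm1 I _ I0 IT)); rewrite !phiD phiN.
have d_phi : 1 + 1 / (n%:R - 1) <= phi I (fun j => (d j)%:~R : R).
  apply: phi_ge_sum0 => //; first by rewrite -rmorph_sum d_sum0.
  by move=> i; rewrite inE ler1z.
have w_ge := inV_phi_ge w_V I0 IT; have w'_le := w'_V.2 I I0 IT.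
lra.
Qed.

Theorem lemma4p1p3 (R : realFieldType) (n : nat) : (2 <= n)%N ->
  (forall (v : 'I_n -> R) (x x' : 'I_n -> int),
     inA v -> inLambda x -> inLambda x' -> x <> x' ->
     forall z z' : 'I_n -> R,
       in_translate v x z -> in_translate v x' z' ->
       1 / (n%:R - 1) <= norm1 (fun j => z j - z' j))
  /\
  (forall (i : nat) (x x' : 'I_n -> int), (i < n)%N ->
     inLambda x -> inLambda x' -> x <> x' ->
     forall z z' : 'I_n -> R,
       in_translate (@g R n i) x z -> in_translate (@g R n i) x' z' ->
       1 / (n%:R - 1) <= norm1 (fun j => z j - z' j)).
Proof.
move=> _; split=> [v x x' _ | i x x' _]; exact: norm1_sub_translates_ge.
Qed.
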